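(* For every $Q\in\mathcal{P}$ and every $0<v<2$, $$D^*(v,Q)=\inf\left\{\mathrm{KL}_2\!\left(Q(A)+\tfrac v2,\,Q(A)\right):\ A\in\mathcal{F},\ 0<Q(A)\le 1-\tfrac v2\right\}.$$
   Context: Let $(\Omega,\mathcal{F},\mu)$ be a finite or $\sigma$-finite measure space, and let $\mathcal{P}$ be the set of probability measures on $(\Omega,\mathcal{F})$ absolutely continuous with respect to $\mu$. For $P,Q\in\mathcal{P}$ the lower-case letters $p,q$ denote their densities with respect to $\mu$. The Kullback–Leibler divergence is $D(P\Vert Q)=\int\ln\frac{dP}{dQ}\,dP$ if $P\ll Q$, and $+\infty$ otherwise. The total variation distance is $V(P,Q)=\int_\Omega|p-q|\,d\mu$. For $v>0$ define $D^*(v,Q)=\inf\{D(P\Vert Q):P\in\mathcal{P},\ V(P,Q)\ge v\}$. All infima over empty sets equal $+\infty$. For $p,q\in[0,1]$, $\mathrm{KL}_2(p,q)=p\ln\frac pq+(1-p)\ln\frac{1-p}{1-q}$, with the conventions $0\ln(0/x)=0$ and $a\ln(a/0)=+\infty$ for $a>0$. *)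

From HB Require Import structures.
From mathcomp Require Import all_boot all_order all_algebra.
From mathcomp Require Import all_classical all_reals all_analysis.
Set Implicit Arguments. Unset Strict Implicit. Unset Printing Implicit Defensive.
Import Order.TTheory GRing.Theory Num.Theory.
Local Open Scope classical_set_scope.
Local Open Scope ring_scope.

Section Defs.
Context {d : measure_display} {T : measurableType d} {R : realType}.
Variable mu : {measure set T -> \bar R}.

(* p is the density (w.r.t. mu) of a probability measure P << mu *)
Definition is_density (p : T -> R) : Prop :=
  [/\ measurable_fun setT p, (forall x, 0 <= p x) &
      (\int[mu]_x (p x)%:E = 1)%E].

Definition Pr (p : T -> R) (A : set T) : \bar R := (\int[mu]_(x in A) (p x)%:E)%E.

Definition abs_cont (p q : T -> R) : Prop :=
  forall A, measurable A -> Pr q A = 0%E -> Pr p A = 0%E.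

(* D(P||Q) = \int ln(dP/dQ) dP = \int_{p>0} p ln(p/q) dmu if P << Q, +oo otherwise *)
Definition KLdiv (p q : T -> R) : \bar R :=
  if `[< abs_cont p q >] then
    (\int[mu]_(x in [set x | (0 < p x)%R]) (p x * ln (p x / q x))%:E)%E
  else +oo%E.

Definition TV (p q : T -> R) : \bar R := (\int[mu]_x (`|p x - q x|)%:E)%E.

Definition Dstar (v : R) (q : T -> R) : \bar R :=
  ereal_inf [set KLdiv p q | p in [set p | is_density p /\ (v%:E <= TV p q)%E]].

End Defs.

Definition xlogxy {R : realType} (a b : R) : \bar R :=
  if a == 0 then 0%E else if b == 0 then +oo%E else (a * ln (a / b))%:E.

Definition KL2 {R : realType} (p q : R) : \bar R :=
  (xlogxy p q + xlogxy (1 - p) (1 - q))%E.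

From HB Require Import structures.
From mathcomp Require Import all_boot all_order all_algebra.
From mathcomp Require Import all_classical all_reals all_analysis.
From mathcomp Require Import measurable_realfun ring lra.
Import Order.TTheory GRing.Theory Num.Theory.
Local Open Scope classical_set_scope.
Local Open Scope ring_scope.

Set Implicit Arguments. Unset Strict Implicit. Unset Printing Implicit Defensive.

(* The infimum is attained by tilting Q: for a = Q(A) and w = v/2, the density
   equal to ((a + w)/a) q on A and to ((1 - a - w)/(1 - a)) q off A is at
   variation distance v from Q, and its divergence from Q is KL2(a + w, a).
   Conversely, if V(P,Q) >= v then A = {q < p} has P(A) - Q(A) = V(P,Q)/2 >= w,
   and integrating t ln(t/s) >= (1 + ln c) t - c s over A and over its complement,
   with these same two constants c, gives D(P||Q) >= KL2(Q(A) + w, Q(A)). *)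

Lemma measurable_invr (R : realType) : measurable_fun [set: R] (@GRing.inv R).
Proof.
rewrite -(setUv [set 0%R]); apply/measurable_funU => //.
  exact: measurableC.
split; first exact: measurable_fun_set1.
apply: open_continuous_measurable_fun.
  by apply: closed_openC; apply: compact_closed; [exact: Rhausdorff|exact: compact_set1].
by move=> x; rewrite inE /= => x0; apply: inv_continuous; exact/eqP.
Qed.

Lemma mul_ln_div_ge (R : realType) (a b c : R) : 0 <= a -> 0 < b -> 0 < c ->
  (1 + ln c) * a - c * b <= a * ln (a / b).
Proof.
move=> a_ge0 b_gt0 c_gt0; have [->|a_neq0] := eqVneq a 0.
  by rewrite mulr0 mul0r sub0r oppr_le0 mulr_ge0 // ltW.
have a_gt0 : 0 < a by rewrite lt_def a_neq0.
have x_gt0 : 0 < c * b / a by rewrite divr_gt0 // mulr_gt0.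
have ln_le : ln (c * b / a) <= c * b / a - 1.
  have := @le_ln1Dx R (c * b / a - 1); rewrite addrCA subrr addr0; apply.
  by rewrite ltrBrDr addrC subrr.
have -> : ln (a / b) = ln c - ln (c * b / a).
  by rewrite -ln_div ?posrE //; congr ln; field; rewrite ?gt_eqF.
have ax : a * (c * b / a) = c * b by field; rewrite gt_eqF.
nra.
Qed.

Lemma KL2E (R : realType) (t s : R) : 0 < s < 1 ->
  KL2 t s = (t * ln (t / s) + (1 - t) * ln ((1 - t) / (1 - s)))%:E.
Proof.
case/andP=> s_gt0 s_lt1; have s'_neq0 : 1 - s != 0 by rewrite subr_eq0 gt_eqF.
rewrite /KL2 /xlogxy (gt_eqF s_gt0) (negbTE s'_neq0).
by case: ifPn => [/eqP->|_]; case: ifPn => [/eqP->|_]; rewrite ?mul0r ?adde0 ?add0e ?add0r ?addr0.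
Qed.

Lemma KL2_le_two_point_bound (R : realType) (a b w : R) (K : \bar R) :
  0 < a -> 0 < w -> a + w <= b -> b <= 1 ->
  (forall c1 c2, 0 < c1 -> 0 < c2 ->
     ((((1 + ln c1) * b - c1 * a) + ((1 + ln c2) * (1 - b) - c2 * (1 - a)))%:E <= K)%E) ->
  (KL2 (a + w) a <= K)%E.
Proof.
move=> a_gt0 w_gt0 awb b_le1 bound.
have a'_gt0 : 0 < 1 - a by lra.
rewrite KL2E; last by apply/andP; split => //; lra.
have [aw1|aw1] := eqVneq (a + w) 1.
  (* only the first constant matters; let the second one tend to 0 *)
  rewrite aw1 subrr mul0r addr0 mul1r; apply/lee_addgt0Pr => e e_gt0.
  have c1_gt0 : 0 < 1 / a by rewrite divr_gt0.
  have c2_gt0 : 0 < e / (1 - a) by rewrite divr_gt0.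
  apply: le_trans (leeD (bound _ _ c1_gt0 c2_gt0) (lexx e%:E)).
  have -> : 1 / a * a = 1 by field; rewrite gt_eqF.
  have -> : e / (1 - a) * (1 - a) = e by field; rewrite gt_eqF.
  have b1 : b = 1 by lra.
  rewrite -!EFinD lee_fin b1 subrr mulr0 mulr1; lra.
set c1 := (a + w) / a; set c2 := (1 - (a + w)) / (1 - a).
have c1a : c1 * a = a + w by rewrite /c1; field; rewrite gt_eqF.
have c2a : c2 * (1 - a) = 1 - (a + w) by rewrite /c2; field; rewrite gt_eqF.
have aw'_gt0 : 0 < 1 - (a + w) by rewrite lt_def subr_eq0 eq_sym aw1 /=; lra.
have c1_ge1 : 1 <= c1 by rewrite /c1 ler_pdivlMr // mul1r; lra.
have c2_gt0 : 0 < c2 by rewrite /c2 divr_gt0.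
have c2_le1 : c2 <= 1 by rewrite /c2 ler_pdivrMr // mul1r; lra.
apply: le_trans (bound c1 c2 (lt_le_trans ltr01 c1_ge1) c2_gt0); rewrite lee_fin c1a c2a.
(* the gap is (b - (a + w)) * (ln c1 - ln c2) >= 0 *)
have ln_c21 : ln c2 <= ln c1.
  by rewrite ler_ln ?posrE ?(le_trans c2_le1 c1_ge1) // (lt_le_trans ltr01 c1_ge1).
have gap_b : 0 <= b - (a + w) by rewrite subr_ge0.
have gap_ln : 0 <= ln c1 - ln c2 by rewrite subr_ge0.
have := mulr_ge0 gap_b gap_ln; nra.
Qed.

Section density.
Context d (T : measurableType d) (R : realType) (mu : {measure set T -> \bar R}).
Implicit Types (p q r s : T -> R) (A B D : set T).

Lemma measurable_ltr (f g : T -> R) : measurable_fun setT f ->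
  measurable_fun setT g -> measurable [set x | f x < g x].
Proof.
move=> mf mg; have := measurable_fun_ltr mf mg measurableT (Y := [set true]) I.
by rewrite setTI.
Qed.

Lemma density_measurable p : is_density mu p -> measurable_fun setT p.
Proof. by case. Qed.

Lemma density_ge0 p x : is_density mu p -> 0 <= p x.
Proof. by case=> _ + _; apply. Qed.

Lemma measurable_density_pos p : is_density mu p -> measurable [set x | 0 < p x].
Proof. by move=> hp; apply: measurable_ltr => //; exact: density_measurable. Qed.

Lemma abs_cont_refl p : abs_cont mu p p.
Proof. by []. Qed.

Lemma integrable_density p D : is_density mu p -> measurable D ->
  mu.-integrable D (EFin \o p).
Proof.
case=> mp p0 p1 mD; apply/integrableP; split.
  by apply/measurable_EFinP; apply: measurable_funS mp.
rewrite (eq_integral (fun x => (p x)%:E)); last first.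
  by move=> x _; rewrite /= ger0_norm.
apply: (le_lt_trans (ge0_subset_integral mu mD measurableT _ _ _)) => //.
- by apply/measurable_EFinP.
- by move=> x _; rewrite lee_fin.
- by rewrite p1 ltry.
Qed.

Lemma Pr_ge0 p A : is_density mu p -> (0 <= Pr mu p A)%E.
Proof. by case=> _ p0 _; apply: integral_ge0 => x _; rewrite lee_fin. Qed.

Lemma Pr_le1 p A : is_density mu p -> measurable A -> (Pr mu p A <= 1)%E.
Proof.
case=> mp p0 p1 mA; rewrite -p1; apply: ge0_subset_integral => //.
- by apply/measurable_EFinP.
- by move=> x _; rewrite lee_fin.
Qed.

Lemma Pr_setU p A B : is_density mu p -> measurable A -> measurable B ->
  A `&` B = set0 -> Pr mu p (A `|` B) = (Pr mu p A + Pr mu p B)%E.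
Proof.
case=> mp _ _ mA mB AB; rewrite /Pr integral_setU //.
  by apply/measurable_EFinP; apply: measurable_funS mp.
exact/disj_set2P.
Qed.

Definition pr p A := fine (Pr mu p A).

Lemma PrE p A : is_density mu p -> measurable A -> Pr mu p A = (pr p A)%:E.
Proof.
move=> hp mA; rewrite /pr fineK // ge0_fin_numE ?Pr_ge0 //.
by rewrite (le_lt_trans (Pr_le1 hp mA)) ?ltry.
Qed.

Lemma pr_ge0 p A : is_density mu p -> 0 <= pr p A.
Proof. by move=> hp; rewrite /pr fine_ge0 //; exact: Pr_ge0. Qed.

Lemma pr_le1 p A : is_density mu p -> measurable A -> pr p A <= 1.
Proof. by move=> hp mA; rewrite -lee_fin -PrE //; exact: Pr_le1. Qed.

Lemma prT p : is_density mu p -> pr p setT = 1.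
Proof. by case=> ? ? p1; rewrite /pr /Pr p1. Qed.

Lemma pr_setIC p A B : is_density mu p -> measurable A -> measurable B ->
  pr p A = pr p (A `&` B) + pr p (A `&` ~` B).
Proof.
move=> hp mA mB; have mAB : measurable (A `&` B) by exact: measurableI.
have mAnB : measurable (A `&` ~` B) by apply: measurableI => //; exact: measurableC.
apply/EFin_inj; rewrite EFinD -!PrE // -Pr_setU //.
- by rewrite -setIUr setUv setIT.
- by rewrite setIACA setICr !setI0.
Qed.

Lemma prC p A : is_density mu p -> measurable A -> pr p (~` A) = 1 - pr p A.
Proof.
move=> hp mA; rewrite -(prT hp) (pr_setIC hp measurableT mA) !setTI.
by rewrite addrC addKr.
Qed.

Lemma pr_setI_support r s A : is_density mu r -> is_density mu s ->
  abs_cont mu r s -> measurable A -> pr r A = pr r (A `&` [set x | 0 < s x]).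
Proof.
move=> hr hs hac mA; have ms := measurable_density_pos hs.
rewrite (pr_setIC hr mA ms); suff -> : pr r (A `&` ~` [set x | 0 < s x]) = 0.
  by rewrite addr0.
have mN : measurable (A `&` ~` [set x | 0 < s x]) by apply: measurableI => //; exact: measurableC.
rewrite /pr hac // /Pr (eq_integral (fun=> 0%E)) ?integral0 //.
move=> x; rewrite inE => -[_ /= /negP]; rewrite -leNgt => sx.
by congr EFin; apply/le_anti; rewrite sx density_ge0.
Qed.

Lemma integrable_scaled_density (k : R) r D : is_density mu r -> measurable D ->
  mu.-integrable D (EFin \o (fun x => k * r x)).
Proof.
move=> hr mD; apply: (eq_integrable mD (fun x => k%:E * (EFin \o r) x)%E).
  by move=> x _; rewrite /= EFinM.
exact/(integrableZl mD)/integrable_density.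
Qed.

Lemma integral_scaled_density (k : R) r D : is_density mu r -> measurable D ->
  (\int[mu]_(x in D) (k * r x)%:E = (k * pr r D)%:E)%E.
Proof.
move=> hr mD; rewrite (eq_integral (fun x => k%:E * (EFin \o r) x)%E); last first.
  by move=> x _; rewrite /= EFinM.
by rewrite (integralZl mD (integrable_density hr mD)) EFinM -PrE.
Qed.

Lemma integrable_combination (k1 k2 : R) r s D : is_density mu r ->
  is_density mu s -> measurable D ->
  mu.-integrable D (EFin \o (fun x => k1 * r x - k2 * s x)).
Proof.
move=> hr hs mD.
apply: (eq_integrable mD ((EFin \o (fun x => (k1 * r x)%R)) \- (EFin \o (fun x => (k2 * s x)%R)))%E).
  by move=> x _; rewrite /= EFinB.
by apply: integrableB => //; exact: integrable_scaled_density.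
Qed.

Lemma integral_combination (k1 k2 : R) r s D : is_density mu r ->
  is_density mu s -> measurable D ->
  (\int[mu]_(x in D) (k1 * r x - k2 * s x)%:E = (k1 * pr r D - k2 * pr s D)%:E)%E.
Proof.
move=> hr hs mD.
rewrite (eq_integral (fun x => (k1 * r x)%:E - (k2 * s x)%:E)%E); last first.
  by move=> x _; rewrite EFinB.
rewrite integralB_EFin //; try exact: integrable_scaled_density.
by rewrite !integral_scaled_density // EFinB.
Qed.

Lemma integral_piecewise_density q (F : T -> R) A (k1 k2 : R) :
  is_density mu q -> measurable A -> measurable_fun setT F ->
  (forall x, A x -> F x = k1 * q x) -> (forall x, ~ A x -> F x = k2 * q x) ->
  (\int[mu]_x (F x)%:E = (k1 * pr q A + k2 * (1 - pr q A))%:E)%E.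
Proof.
move=> hq mA mF F1 F2.
rewrite -(setUv A) integral_setU //; first last.
- by apply/disj_set2P; rewrite setICr.
- by rewrite setUv; apply/measurable_EFinP.
- exact: measurableC.
rewrite (eq_integral (fun x => (k1 * q x)%:E)); last by move=> x; rewrite inE => /F1 ->.
rewrite [X in (_ + X)%E](eq_integral (fun x => (k2 * q x)%:E)); last first.
  by move=> x; rewrite inE => /F2 ->.
rewrite !integral_scaled_density //; last exact: measurableC.
by rewrite prC // -EFinD.
Qed.

Lemma le_integral_integrable_lb D (f g : T -> \bar R) : measurable D ->
  measurable_fun D f -> mu.-integrable D g -> {in D, forall x, (g x <= f x)%E} ->
  (\int[mu]_(x in D) g x <= \int[mu]_(x in D) f x)%E.
Proof.
move=> mD mf intg gf; rewrite integralE [leRHS]integralE leeB//.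
- apply: ge0_le_integral => //.
  + by move/integrableP : intg => [+ _]; exact: measurable_funepos.
  + exact: measurable_funepos.
  + by move=> x /mem_set; exact: funepos_le.
- apply: ge0_le_integral => //.
  + exact: measurable_funeneg.
  + by move/integrableP : intg => [+ _]; exact: measurable_funeneg.
  + by move=> x /mem_set; exact: funeneg_le.
Qed.

Lemma measurable_KL_integrand p q : measurable_fun setT p ->
  measurable_fun setT q -> measurable_fun setT (fun x => p x * ln (p x / q x)).
Proof.
move=> mp mq; apply: measurable_funM => //.
have mqV : measurable_fun setT (fun x => (q x)^-1).
  exact: measurableT_comp (@measurable_invr R) mq.
by apply: measurableT_comp; [exact: measurable_ln | exact: measurable_funM].
Qed.

Lemma KLdivE p q : abs_cont mu p q -> (forall x, 0 <= p x) ->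
  KLdiv mu p q = (\int[mu]_x (p x * ln (p x / q x))%:E)%E.
Proof.
move=> hac p0; rewrite /KLdiv asboolT // integral_mkcond.
apply: eq_integral => x _; rewrite patchE; case: ifPn => // /negP xP.
suff -> : p x = 0 by rewrite mul0r.
by apply/le_anti; rewrite p0 andbT leNgt; apply/negP => px; apply: xP; rewrite inE.
Qed.

Lemma integral_KL_integrand_ge p q B (c : R) : is_density mu p -> is_density mu q ->
  abs_cont mu p q -> measurable B -> 0 < c ->
  (((1 + ln c) * pr p B - c * pr q B)%:E <=
    \int[mu]_(x in B) (p x * ln (p x / q x))%:E)%E.
Proof.
move=> hp hq hac mB c_gt0.
have mKL := measurable_KL_integrand (density_measurable hp) (density_measurable hq).
set S := [set x | 0 < q x]; have mS : measurable S by exact: measurable_density_pos.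
have mBS : measurable (B `&` S) by exact: measurableI.
have mBnS : measurable (B `&` ~` S) by apply: measurableI => //; exact: measurableC.
rewrite [in X in (_ <= X)%E](_ : B = (B `&` S) `|` (B `&` ~` S)); last first.
  by rewrite -setIUr setUv setIT.
rewrite integral_setU //; first last.
- by apply/disj_set2P; rewrite setIACA setICr !setI0.
- by apply/measurable_EFinP; apply: measurable_funS mKL.
rewrite [X in (_ <= _ + X)%E](_ : _ = 0%E); last first.
  (* off the support of q, [ln (p x / 0) = ln 0 = 0] *)
  rewrite (eq_integral (fun=> 0%E)) ?integral0 //.
  move=> x; rewrite inE => -[_ /= /negP]; rewrite -leNgt => qx.
  have -> : q x = 0 by apply/le_anti; rewrite qx density_ge0.
  by rewrite invr0 mulr0 ln0 // mulr0.
rewrite adde0 (pr_setI_support hp hq hac mB) (pr_setI_support hq hq (@abs_cont_refl q) mB).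
rewrite -integral_combination //; apply: le_integral_integrable_lb => //.
- by apply/measurable_EFinP; apply: measurable_funS mKL.
- exact: integrable_combination.
move=> x; rewrite inE => -[_ /= qx]; rewrite lee_fin.
by apply: mul_ln_div_ge => //; exact: density_ge0.
Qed.

Lemma KLdiv_ge_partition p q A (c1 c2 : R) : is_density mu p -> is_density mu q ->
  abs_cont mu p q -> measurable A -> 0 < c1 -> 0 < c2 ->
  ((((1 + ln c1) * pr p A - c1 * pr q A) +
   ((1 + ln c2) * (1 - pr p A) - c2 * (1 - pr q A)))%:E <= KLdiv mu p q)%E.
Proof.
move=> hp hq hac mA c1_gt0 c2_gt0.
have mKL := measurable_KL_integrand (density_measurable hp) (density_measurable hq).
rewrite KLdivE // => [|x]; last exact: density_ge0.
rewrite -(setUv A) integral_setU //; first last.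
- by apply/disj_set2P; rewrite setICr.
- by rewrite setUv; apply/measurable_EFinP.
- exact: measurableC.
rewrite EFinD -!prC //; apply: leeD; apply: integral_KL_integrand_ge => //.
exact: measurableC.
Qed.

Lemma TV_density p q : is_density mu p -> is_density mu q ->
  TV mu p q = (2 * (pr p [set x | q x < p x] - pr q [set x | q x < p x]))%:E.
Proof.
move=> hp hq; set A := [set x | q x < p x].
have mA : measurable A by apply: measurable_ltr; exact: density_measurable.
have mpq : measurable_fun setT (fun x => p x - q x).
  by apply: measurable_funB; exact: density_measurable.
rewrite /TV -(setUv A) integral_setU //; first last.
- by apply/disj_set2P; rewrite setICr.
- rewrite setUv; apply/measurable_EFinP.
  by apply: (measurableT_comp _ mpq); exact: normr_measurable.
- exact: measurableC.
rewrite (eq_integral (fun x => (1 * p x - 1 * q x)%:E)); last first.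
  move=> x; rewrite inE /A /= => h; rewrite !mul1r ger0_norm //.
  by rewrite subr_ge0 ltW.
rewrite [X in (_ + X)%E](eq_integral (fun x => (1 * q x - 1 * p x)%:E)); last first.
  move=> x; rewrite inE /A /= => /negP; rewrite -leNgt => h.
  by rewrite !mul1r ler0_norm ?opprB // subr_le0.
rewrite !integral_combination //; last exact: measurableC.
by rewrite -EFinD !prC //; congr EFin; lra.
Qed.

Definition tilt q A (c1 c2 : R) : T -> R := fun x => (c2 + (c1 - c2) * \1_A x) * q x.

Lemma tilt_in q A c1 c2 x : A x -> tilt q A c1 c2 x = c1 * q x.
Proof. by move=> Ax; rewrite /tilt indicE mem_set // mulr1 addrC subrK. Qed.

Lemma tilt_notin q A c1 c2 x : ~ A x -> tilt q A c1 c2 x = c2 * q x.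
Proof. by move=> Ax; rewrite /tilt indicE memNset // mulr0 addr0. Qed.

Lemma measurable_tilt q A c1 c2 : measurable_fun setT q -> measurable A ->
  measurable_fun setT (tilt q A c1 c2).
Proof.
move=> mq mA; apply: measurable_funM => //.
by apply: measurable_funD => //; apply: measurable_funM.
Qed.

Section tilt.
Variables (q : T -> R) (A : set T) (c1 c2 : R).
Hypotheses (hq : is_density mu q) (mA : measurable A).
Hypotheses (c1_ge0 : 0 <= c1) (c2_ge0 : 0 <= c2).

Let mtilt : measurable_fun setT (tilt q A c1 c2).
Proof. exact: measurable_tilt (density_measurable hq) mA. Qed.

Lemma tilt_ge0 x : 0 <= tilt q A c1 c2 x.
Proof.
have [Ax|Ax] := pselect (A x).
  by rewrite tilt_in // mulr_ge0 // density_ge0.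
by rewrite tilt_notin // mulr_ge0 // density_ge0.
Qed.

Lemma tilt_density : c1 * pr q A + c2 * (1 - pr q A) = 1 ->
  is_density mu (tilt q A c1 c2).
Proof.
move=> mass1; split => //; first exact: tilt_ge0.
rewrite (integral_piecewise_density (k1 := c1) (k2 := c2) hq mA mtilt) ?mass1 //.
- by move=> x; exact: tilt_in.
- by move=> x; exact: tilt_notin.
Qed.

Lemma tilt_abs_cont : abs_cont mu (tilt q A c1 c2) q.
Proof.
move=> B mB qB; apply/le_anti/andP; split; last first.
  by apply: integral_ge0 => x _; rewrite lee_fin tilt_ge0.
apply: (@le_trans _ _ (\int[mu]_(x in B) ((c1 + c2) * q x)%:E)%E); last first.
  by rewrite integral_scaled_density // /pr qB mulr0.
apply: ge0_le_integral => //.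
- by move=> x _; rewrite lee_fin tilt_ge0.
- by apply/measurable_EFinP; apply: measurable_funS mtilt.
- apply/measurable_EFinP.
  by apply: measurable_funS (measurable_funM _ (density_measurable hq)).
move=> x _; rewrite lee_fin; have q_ge0 := density_ge0 x hq.
have [Ax|Ax] := pselect (A x).
  by rewrite tilt_in // ler_wpM2r // lerDl.
by rewrite tilt_notin // ler_wpM2r // lerDr.
Qed.

Lemma TV_tilt : TV mu (tilt q A c1 c2) q = (`|c1 - 1| * pr q A + `|c2 - 1| * (1 - pr q A))%:E.
Proof.
have mq := density_measurable hq.
rewrite /TV (integral_piecewise_density (k1 := `|c1 - 1|) (k2 := `|c2 - 1|) hq mA) //.
- by apply: (measurableT_comp _ (measurable_funB mtilt mq)); exact: normr_measurable.
- move=> x Ax; rewrite tilt_in // -{2}(mul1r (q x)) -mulrBl normrM.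
  by rewrite (ger0_norm (density_ge0 x hq)).
- move=> x Ax; rewrite tilt_notin // -{2}(mul1r (q x)) -mulrBl normrM.
  by rewrite (ger0_norm (density_ge0 x hq)).
Qed.

Lemma KLdiv_tilt :
  KLdiv mu (tilt q A c1 c2) q = (c1 * ln c1 * pr q A + c2 * ln c2 * (1 - pr q A))%:E.
Proof.
rewrite KLdivE; [|exact: tilt_abs_cont|exact: tilt_ge0].
have mKL := measurable_KL_integrand mtilt (density_measurable hq).
rewrite (integral_piecewise_density (k1 := c1 * ln c1) (k2 := c2 * ln c2) hq mA mKL).
- by [].
- move=> x Ax; rewrite tilt_in //; have [->|qx] := eqVneq (q x) 0.
    by rewrite !mulr0 mul0r.
  by rewrite mulfK // mulrAC.
- move=> x Ax; rewrite tilt_notin //; have [->|qx] := eqVneq (q x) 0.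
    by rewrite !mulr0 mul0r.
  by rewrite mulfK // mulrAC.
Qed.

End tilt.

Lemma Dstar_le_KL2 q A (v : R) : is_density mu q -> measurable A -> 0 < v ->
  0 < pr q A -> pr q A + v / 2 <= 1 -> (Dstar mu v q <= KL2 (pr q A + v / 2) (pr q A))%E.
Proof.
move=> hq mA v_gt0; set a := pr q A; set w := v / 2 => a_gt0 aw_le1.
have w_gt0 : 0 < w by rewrite divr_gt0.
have a_lt1 : a < 1 by lra.
have a'_gt0 : 0 < 1 - a by lra.
set c1 := (a + w) / a; set c2 := (1 - (a + w)) / (1 - a).
have c1a : c1 * a = a + w by rewrite /c1; field; rewrite gt_eqF.
have c2a : c2 * (1 - a) = 1 - (a + w) by rewrite /c2; field; rewrite gt_eqF.
have c1_ge1 : 1 <= c1 by rewrite /c1 ler_pdivlMr // mul1r; lra.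
have c2_ge0 : 0 <= c2 by rewrite /c2 divr_ge0 //; lra.
have c2_le1 : c2 <= 1 by rewrite /c2 ler_pdivrMr // mul1r; lra.
have c1_ge0 : 0 <= c1 by lra.
have hp : is_density mu (tilt q A c1 c2).
  by apply: tilt_density => //; rewrite -/a c1a c2a; lra.
apply: (@le_trans _ _ (KLdiv mu (tilt q A c1 c2) q)).
  apply: ereal_inf_lbound; exists (tilt q A c1 c2) => //; split => //.
  rewrite TV_tilt // lee_fin -/a ger0_norm ?subr_ge0 // ler0_norm ?subr_le0 //.
  have -> : (c1 - 1) * a = w by lra.
  have -> : - (c2 - 1) * (1 - a) = w by lra.
  by rewrite /w; lra.
rewrite KLdiv_tilt // KL2E; last by apply/andP.
by rewrite -/a -/c1 -/c2 (mulrAC c1) c1a (mulrAC c2) c2a.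
Qed.

Lemma KLdiv_ge_KL2 p q (v : R) : is_density mu p -> is_density mu q ->
  abs_cont mu p q -> 0 < v -> (v%:E <= TV mu p q)%E ->
  exists2 A, [/\ measurable A, 0 < pr q A & pr q A + v / 2 <= 1] &
    (KL2 (pr q A + v / 2) (pr q A) <= KLdiv mu p q)%E.
Proof.
move=> hp hq hac v_gt0 hTV; set A := [set x | q x < p x].
have mA : measurable A by apply: measurable_ltr; exact: density_measurable.
rewrite TV_density // lee_fin -/A in hTV.
set a := pr q A in hTV *; set b := pr p A in hTV *.
have b_le1 : b <= 1 by exact: pr_le1.
have a_gt0 : 0 < a.
  rewrite lt_def pr_ge0 // andbT; apply/negP => /eqP a0.
  have : Pr mu p A = 0%E by apply: hac => //; rewrite PrE // -/a a0.
  by rewrite PrE // -/b => -[b0]; lra.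
exists A; first by split => //; rewrite -/a; lra.
apply: (KL2_le_two_point_bound (b := b)) => //; [exact: divr_gt0 | rewrite -/a; lra |].
by move=> c1 c2; exact: KLdiv_ge_partition.
Qed.

End density.

Theorem mainTheorem11 (d : measure_display) (T : measurableType d) (R : realType)
  (mu : {measure set T -> \bar R}) (mu_sf : sigma_finite setT mu)
  (q : T -> R) (hq : is_density mu q) (v : R) (hv0 : 0 < v) (hv2 : v < 2) :
  Dstar mu v q =
  ereal_inf [set KL2 (fine (Pr mu q A) + v / 2) (fine (Pr mu q A)) |
             A in [set A | measurable A /\ (0 < Pr mu q A)%E /\
                           (Pr mu q A <= (1 - v / 2)%:E)%E]].
Proof.
apply/le_anti/andP; split.
- apply/ereal_infP => _ [A [mA [aP aQ]] <-].
  rewrite PrE // lte_fin in aP; rewrite PrE // lee_fin in aQ.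
  by apply: Dstar_le_KL2 => //; lra.
- apply/ereal_infP => _ [p [hp hTV] <-].
  have [hac|hac] := pselect (abs_cont mu p q); last by rewrite /KLdiv asboolF // leey.
  have [A [mA aP aQ] KL2_le] := KLdiv_ge_KL2 hp hq hac hv0 hTV.
  apply: le_trans KL2_le; apply: ereal_inf_lbound; exists A => //.
  by split => //; rewrite PrE // lte_fin lee_fin; split => //; lra.
Qed.
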